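(* Let $m\ge 2$, $\gamma>0$ and $u>0$, and let $h\in\{N,S\}$. Let $\kappa\in\mathbb C$ with $k=|\kappa|>0$. Then there is $E_0=E_0(\gamma,u,k)>0$ such that the matrix $\hat H^h(\kappa)$ has no eigenvalue in the interval $(-E_0,E_0)$. Moreover, all eigenvalues of $\hat H^h(\kappa)$ are simple.
   Context: Let $\sigma_1,\sigma_2$ be the standard Pauli matrices and $A=\begin{pmatrix}0&0\\1&0\end{pmatrix}$. For a real number $v$ and $\kappa=k_x+ik_y\in\mathbb C$, let $\hat H(\kappa;v)$ be the $2m\times 2m$ Hermitian matrix written in $m\times m$ blocks of size $2\times2$ whose $j$-th diagonal block is $u_jI_2+\begin{pmatrix}0&\bar\kappa\\ \kappa&0\end{pmatrix}$ with $u_j=\frac{v}{m-1}\big(j-\frac{m+1}{2}\big)$, whose $(j,j+1)$ block is $\gamma A$ and whose $(j+1,j)$ block is $\gamma A^*$ for $1\le j\le m-1$, all other blocks being zero. Define $\hat H^N(\kappa)=\hat H(\kappa;u)$ and $\hat H^S(\kappa)=\hat H(\kappa;-u)$. *)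

From HB Require Import structures.
From mathcomp Require Import all_boot all_order all_algebra.
From mathcomp Require Import complex.
Set Implicit Arguments. Unset Strict Implicit. Unset Printing Implicit Defensive.
Import Order.TTheory GRing.Theory Num.Theory.
Local Open Scope ring_scope.
Local Open Scope complex_scope.

(* Rows/columns of the 2m x 2m matrix are indexed by
   p : 'I_(2*m); p corresponds to block j = p %/ 2 (0-based, i.e. the paper's
   block index j+1) and position a = p %% 2 inside the 2x2 block. *)

Definition uj (R : rcfType) (m : nat) (v : R) (j : nat) : R :=
  v / (m%:R - 1) * ((j.+1)%:R - (m%:R + 1) / 2).

Definition Hentry (R : rcfType) (m : nat) (gamma v : R) (kappa : R[i])
  (j a l b : nat) : R[i] :=
  if j == l then
    (if a == b then (uj m v j)%:C
     else if (a == 0%N) && (b == 1%N) then kappa^*%R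
     else kappa)
  else if l == j.+1 then
    (* gamma * A, A = [[0,0],[1,0]] *)
    (if (a == 1%N) && (b == 0%N) then gamma%:C else 0)
  else if j == l.+1 then
    (* gamma * A^*, A^* = [[0,1],[0,0]] *)
    (if (a == 0%N) && (b == 1%N) then gamma%:C else 0)
  else 0.

Definition Hhat (R : rcfType) (m : nat) (gamma v : R) (kappa : R[i])
  : 'M[R[i]]_(2 * m) :=
  \matrix_(p, q) Hentry m gamma v kappa (p %/ 2) (p %% 2) (q %/ 2) (q %% 2).

Inductive NS := hN | hS.

Definition HN (R : rcfType) m (gamma u : R) kappa := Hhat m gamma u kappa.
Definition HS (R : rcfType) m (gamma u : R) kappa := Hhat m gamma (- u) kappa.

Definition Hh (R : rcfType) (h : NS) m (gamma u : R) kappa :=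
  match h with hN => HN m gamma u kappa | hS => HS m gamma u kappa end.

Definition simple_eigenvalue (F : fieldType) n (A : 'M[F]_n) (x : F) :=
  mup x (char_poly A) = 1%N.

From HB Require Import structures.
From mathcomp Require Import all_boot all_order all_algebra.
From mathcomp Require Import complex zify ring.
Set Implicit Arguments. Unset Strict Implicit. Unset Printing Implicit Defensive.
Import Order.TTheory GRing.Theory Num.Theory.
Local Open Scope ring_scope.
Local Open Scope complex_scope.

(* Write kappa = k w with |w| = 1.  Conjugating by diag(w^(j+a)) (block j,
   position a) turns H(kappa) into the Hermitian matrix H(k), so both have the
   same characteristic polynomial.  The superdiagonal of H(k) consists of the
   nonzero entries k and gamma, hence rank (H(k) - lam) >= 2m - 1 for every
   lam; a diagonalizable matrix with this property has only simple
   eigenvalues.  Since u_(m+1-j) = - u_j, conjugating by the reversal of the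
   2m coordinates with alternating signs maps H(k) to -H(k), so its
   characteristic polynomial is even; then 0 would be a root of even
   multiplicity, so it is not an eigenvalue.  The finitely many eigenvalues of
   H(k) thus stay at a positive distance E0 from 0, which depends on k but not
   on the phase w. *)

Lemma char_poly_conj (F : fieldType) n (X A Y : 'M[F]_n) :
  X *m Y = 1%:M -> char_poly (X *m A *m Y) = char_poly A.
Proof.
move=> XY.
have eX : ('X%:M : 'M[{poly F}]_n) = map_mx polyC X *m 'X%:M *m map_mx polyC Y.
  by rewrite mul_mx_scalar -scalemxAl -map_mxM XY map_mx1 scalemx1.
rewrite /char_poly /char_poly_mx {1}eX !map_mxM.
rewrite -mulmxBl -mulmxBr !det_mulmx mulrC mulrA -det_mulmx -map_mxM.
by rewrite (mulmx1C XY) map_mx1 det1 mul1r.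
Qed.

Lemma char_poly_diag_conj (F : fieldType) n (c : 'I_n -> F) (A : 'M[F]_n) :
  (forall p, c p != 0) ->
  char_poly (\matrix_(p, q) (c p * A p q / c q)) = char_poly A.
Proof.
move=> c0; rewrite -[RHS](@char_poly_conj _ _ (diag_mx (\row_p c p))
                                          _ (diag_mx (\row_p (c p)^-1))).
  by congr (char_poly _); apply/matrixP => p q; rewrite mul_mx_diag mul_diag_mx !mxE.
apply/matrixP => p q; rewrite mul_diag_mx !mxE.
by case: eqP => [->|_]; rewrite ?mulr1n ?divff ?mulr0.
Qed.

Lemma char_poly_rev_sign_conj (F : fieldType) n (s : 'I_n -> F) (A : 'M[F]_n) :
  (forall p, s p * s p = 1) ->
  char_poly (\matrix_(p, q) (s p * A (rev_ord p) (rev_ord q) * s q)) = char_poly A.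
Proof.
move=> s2.
pose X : 'M[F]_n := \matrix_(p, r) (if r == rev_ord p then s p else 0).
have XA B : X *m B = \matrix_(p, q) (s p * B (rev_ord p) q).
  apply/matrixP => p q; rewrite !mxE (bigD1 (rev_ord p)) //= big1 ?addr0.
    by rewrite mxE eqxx.
  by move=> r /negbTE rp; rewrite mxE rp mul0r.
have AX B : B *m X^T = \matrix_(p, q) (B p (rev_ord q) * s q).
  apply/matrixP => p q; rewrite !mxE (bigD1 (rev_ord q)) //= big1 ?addr0.
    by rewrite !mxE eqxx.
  by move=> r /negbTE rp; rewrite !mxE rp mulr0.
rewrite -[RHS](@char_poly_conj _ _ X A X^T).
  by congr (char_poly _); apply/matrixP => p q; rewrite AX XA !mxE.
apply/matrixP => p q; rewrite AX !mxE (inj_eq rev_ord_inj) eq_sym.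
by case: eqP => [->|_]; rewrite ?s2 ?mul0r.
Qed.

Lemma char_poly_comp_oppX (F : fieldType) n (A : 'M[F]_n) :
  char_poly A \Po (- 'X) = (-1) ^+ n * char_poly (- A).
Proof.
rewrite /char_poly -det_map_mx -detZ; congr (\det _).
apply/matrixP => i j; rewrite !mxE.
case: (i == j); rewrite ?mulr1n ?mulr0n /=.
- by rewrite comp_polyB comp_polyX comp_polyC polyCN mulN1r opprB addrC.
- by rewrite !sub0r raddfN /= comp_polyC polyCN mulN1r opprK.
Qed.

Lemma mxrank_mxsub (F : fieldType) m n m' n' (f : 'I_m' -> 'I_m) (g : 'I_n' -> 'I_n)
    (A : 'M[F]_(m, n)) :
  (\rank (mxsub f g A) <= \rank A)%N.
Proof.
have -> : mxsub f g A = rowsub f 1%:M *m A *m colsub g 1%:M.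
  by rewrite mulmx_colsub mul_rowsub_mx mul1mx mulmx1; apply/matrixP => i j; rewrite !mxE.
exact: leq_trans (mxrankM_maxl _ _) (mxrankM_maxr _ _).
Qed.

Lemma mxrank_lower_hessenberg (F : fieldType) n (B : 'M[F]_n) :
  (forall p q : 'I_n, (p.+1 < q)%N -> B p q = 0) ->
  (forall p q : 'I_n, q = p.+1 :> nat -> B p q != 0) ->
  (n.-1 <= \rank B)%N.
Proof.
case: n B => [|n] B B0 Bsuper //=.
pose M := mxsub (widen_ord (leqnSn n)) (lift ord0) B.
suff rM : \rank M = n by rewrite -[X in (X <= _)%N]rM mxrank_mxsub.
apply: mxrank_unit; rewrite unitmxE det_trig.
  by rewrite unitfE; apply/prodf_neq0 => i _; rewrite mxE Bsuper.
by apply/is_trig_mxP => i j ij; rewrite mxE B0.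
Qed.

Lemma mup_prod_XsubC_card (F : fieldType) n (d : 'I_n -> F) lam :
  mup lam (\prod_(i < n) ('X - (d i)%:P)) = #|[pred i | d i == lam]|.
Proof.
rewrite -big_enum /= -(big_map d predT (fun z => 'X - z%:P)) mu_prod_XsubC.
rewrite count_map cardE /enum_mem size_filter /= filter_predT.
by apply: eq_count => i; rewrite /= eq_sym.
Qed.

Lemma mxrank_diag_mx_two_zeros (F : fieldType) n (d : 'rV[F]_n) (i j : 'I_n) :
  i != j -> d 0 i = 0 -> d 0 j = 0 -> (\rank (diag_mx d) <= n - 2)%N.
Proof.
move=> ij di dj.
pose h (a : 'I_2) := if a == ord0 then i else j.
have h_inj : injective h.
  move=> a b; rewrite /h.
  case: (a =P ord0) => [->|/eqP a0]; case: (b =P ord0) => [->|/eqP b0] //;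
    try by move=> e; move: ij; rewrite e eqxx.
  by move=> _; apply/val_inj; move: a b a0 b0 => [[|[|a]] ?] [[|[|b]] ?].
pose V := rowsub h (1%:M : 'M[F]_n).
have rV : \rank V = 2.
  apply/eqP; rewrite eqn_leq rank_leq_row /=.
  apply: leq_trans (mxrankM_maxl V (colsub h 1%:M)).
  suff -> : V *m colsub h 1%:M = 1%:M by rewrite mxrank1.
  by apply/matrixP => a b; rewrite mul_rowsub_mx mul1mx !mxE (inj_eq h_inj).
have VdV : V *m diag_mx d = 0.
  apply/matrixP => a b; rewrite mul_rowsub_mx mul1mx !mxE /h.
  by case: (a == ord0); rewrite ?di ?dj mul0rn.
have : (\rank V <= \rank (kermx (diag_mx d)))%N by apply/mxrankS/sub_kermxP.
by rewrite rV mxrank_ker; lia.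
Qed.

Lemma normalmx_mup_char_poly_le1 (C : numClosedFieldType) n (A : 'M[C]_n) :
  A \is normalmx -> (forall lam, (n.-1 <= \rank (A - lam%:M)%R)%N) ->
  forall lam, (mup lam (char_poly A) <= 1)%N.
Proof.
move=> /orthomx_spectralP eA rk lam.
set P := spectralmx A in eA; set d := spectral_diag A in eA.
have PV : invmx P *m P = 1%:M by rewrite mulVmx ?spectral_unit.
have eA_lam : A - lam%:M = invmx P *m diag_mx (d - const_mx lam) *m P.
  rewrite raddfB /= diag_const_mx mulmxBr mulmxBl -eA scalar_mxC.
  by rewrite -mulmxA PV mulmx1.
rewrite eA char_poly_conj // char_poly_trig ?diag_mx_is_trig //.
under eq_bigr do rewrite mxE eqxx mulr1n.
rewrite mup_prod_XsubC_card leqNgt; apply/card_gt1P => -[i [j [di dj ij]]].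
have : (\rank (A - lam%:M)%R <= n - 2)%N.
  rewrite eA_lam (leq_trans (mxrankM_maxl _ _)) // (leq_trans (mxrankM_maxr _ _)) //.
  apply: (mxrank_diag_mx_two_zeros ij); rewrite !mxE; apply/eqP.
    by rewrite subr_eq0; exact: di.
  by rewrite subr_eq0; exact: dj.
move=> /(leq_trans (rk lam)) rk_le.
have : i <> j :> nat by move/val_inj; apply/eqP.
by have := ltn_ord i; have := ltn_ord j; lia.
Qed.

Lemma normalmx_simple_eigenvalue (C : numClosedFieldType) n (A : 'M[C]_n) :
  A \is normalmx -> (forall lam, (n.-1 <= \rank (A - lam%:M)%R)%N) ->
  forall lam, eigenvalue A lam -> simple_eigenvalue A lam.
Proof.
move=> An rk lam; rewrite eigenvalue_root_char -dvdp_XsubCl => dvd_lam.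
apply/eqP; rewrite eqn_leq normalmx_mup_char_poly_le1 //=.
by rewrite mup_geq ?monic_neq0 ?char_poly_monic // expr1.
Qed.

Lemma even_poly_mup0_even (F : numFieldType) (p : {poly F}) :
  p != 0 -> p \Po (- 'X) = p -> ~~ odd (mup 0 p).
Proof.
move=> p0 p_even.
have [k [q /implyP/(_ p0) q0 pE]] := multiplicity_XsubC p 0.
have -> : mup 0 p = k by rewrite pE mupMr // mup_XsubCX eqxx.
rewrite subr0 in pE.
have Xk0 : 'X ^+ k != 0 :> {poly F} by rewrite expf_neq0 ?polyX_eq0.
have qE : (-1) ^+ k * (q \Po (- 'X)) = q.
  apply: (mulIf Xk0); rewrite -[RHS]pE -[in RHS]p_even pE.
  by rewrite comp_polyM comp_Xn_poly [(- 'X) ^+ k]exprNn mulrCA mulrA.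
have /eqP := congr1 (horner^~ 0) qE.
rewrite !hornerE horner_comp !hornerE oppr0 -signr_odd.
by case: (odd k); rewrite ?expr0 ?mul1r // expr1 mulN1r eqNr -rootE (negPf q0).
Qed.

Lemma norm_lower_bound (R : rcfType) (s : seq R[i]) :
  0 \notin s -> exists2 E : R, 0 < E & forall z, z \in s -> E%:C <= `|z|.
Proof.
elim: s => [|z s IH]; first by exists 1.
rewrite inE negb_or eq_sym => /andP [z0 /IH [E E0 sE]].
set e := Num.sqrt (complex.Re z ^+ 2 + complex.Im z ^+ 2).
have normzE : e%:C = `|z| by rewrite normc_def.
exists (Num.min e E).
  by rewrite lt_min E0 andbT -ltcR normzE normr_gt0.
move=> y; rewrite inE => /orP [/eqP->|ys].
  by rewrite -normzE lecR ge_min lexx.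
by apply: le_trans (sE _ ys); rewrite lecR ge_min lexx orbT.
Qed.

Lemma real_roots_away_from0 (R : rcfType) (p : {poly R[i]}) :
  ~~ root p 0 -> exists2 E : R, 0 < E & forall x : R, `|x| < E -> ~~ root p x%:C.
Proof.
move=> p0; have pn0 : p != 0 by apply: contraNneq p0 => ->; rewrite root0.
have [rs prs] := closed_field_poly_normal p.
have rootE z : root p z = (z \in rs).
  by rewrite prs rootZ ?lead_coef_eq0 // root_prod_XsubC.
have [|E E0 rsE] := @norm_lower_bound R rs; first by rewrite -rootE.
exists E => // x xE; rewrite rootE; apply: contraTN xE => /rsE.
by rewrite normc_def /= expr0n addr0 sqrtr_sqr lecR -leNgt.
Qed.

Lemma conj_realC (R : rcfType) (x : R) : (x%:C)^*%R = x%:C :> R[i].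
Proof. by apply: conj_Creal; rewrite complex_real. Qed.

Section Hamiltonian.

Variables (R : rcfType) (m : nat) (gamma v : R).

Local Notation H := (Hentry m gamma v).

Lemma uj_rev j : (j < m)%N -> uj m v (m.-1 - j) = - uj m v j.
Proof.
move=> jm; rewrite /uj.
have -> : (m.-1 - j).+1 = (m - j)%N by lia.
rewrite natrB; last by lia.
rewrite -(natr1 j).
by move: (v / _) => c; field.
Qed.

Lemma Hentry_phase (k : R) (kappa w : R[i]) :
  w != 0 -> kappa = k%:C * w -> kappa^*%R = k%:C / w ->
  forall j a l b, (a < 2)%N -> (b < 2)%N ->
  H kappa j a l b = w ^+ (j + a) * H k%:C j a l b / w ^+ (l + b).
Proof.
move=> w0 ek ekc j a l b.
case: a => [|[|a]] // _; case: b => [|[|b]] // _; rewrite /Hentry /=;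
case: (j =P l) => [<-|jl] /=; rewrite ?eqxx ?ekc ?conj_realC ?ek ?addn0 ?addn1 ?exprS;
try (field; by rewrite ?expf_neq0).
all: case: (l =P j.+1) => [->|lj] /=; rewrite ?exprS; try (field; by rewrite ?expf_neq0).
all: case: (j =P l.+1) => [->|lj2] /=; rewrite ?exprS; try (field; by rewrite ?expf_neq0).
Qed.

Lemma Hentry_rev_sign (k : R) j a l b :
  (j < m)%N -> (l < m)%N -> (a < 2)%N -> (b < 2)%N ->
  (-1) ^+ a * H k%:C (m.-1 - j) (1 - a) (m.-1 - l) (1 - b) * (-1) ^+ b
  = - H k%:C j a l b.
Proof.
move=> jm lm a2 b2.
have E1 : ((m.-1 - j)%N == (m.-1 - l)%N) = (j == l) by apply/eqP/eqP; lia.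
have E2 : ((m.-1 - l)%N == (m.-1 - j)%N.+1) = (j == l.+1) by apply/eqP/eqP; lia.
have E3 : ((m.-1 - j)%N == (m.-1 - l)%N.+1) = (l == j.+1) by apply/eqP/eqP; lia.
rewrite /Hentry E1 E2 E3.
case: (j =P l) => [ejl|jl].
  by subst l; case: a a2 => [|[|a]] // _; case: b b2 => [|[|b]] // _ /=;
     rewrite ?uj_rev // ?conj_realC ?rmorphN /=; ring.
case: (l =P j.+1) => [lj1|lj]; case: (j =P l.+1) => [jl1|jl2]; try lia;
  by case: a a2 => [|[|a]] // _; case: b b2 => [|[|b]] // _ /=; ring.
Qed.

Lemma Hentry_adjoint (k : R) j a l b : (a < 2)%N -> (b < 2)%N ->
  H k%:C j a l b = (H k%:C l b j a)^*%R.
Proof.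
move=> a2 b2; rewrite /Hentry.
case: (j =P l) => [<-|jl].
  by rewrite eqxx; case: a a2 => [|[|a]] // _; case: b b2 => [|[|b]] // _ /=;
     rewrite ?conj_realC.
rewrite (_ : (l == j) = false); last by apply/eqP => e; apply: jl.
case: (l =P j.+1) => [lj1|lj]; case: (j =P l.+1) => [jl1|jl2]; try lia;
  by case: a a2 => [|[|a]] // _; case: b b2 => [|[|b]] // _ /=;
     rewrite ?conj_realC ?rmorph0.
Qed.

Lemma Hentry_far kappa (p q : nat) :
  (p.+1 < q)%N -> H kappa (p %/ 2) (p %% 2) (q %/ 2) (q %% 2) = 0.
Proof.
move=> pq; rewrite /Hentry.
case: (p %/ 2 =P q %/ 2)%N => [|_]; first lia.
case: (q %/ 2 =P (p %/ 2).+1)%N => [e|_].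
  by case: (p %% 2 =P 1)%N => [e1|] /=; case: (q %% 2 =P 0)%N => [e2|] //=; lia.
by case: (p %/ 2 =P (q %/ 2).+1)%N => [|_] //; lia.
Qed.

Lemma Hentry_superdiag_neq0 kappa (p : nat) : kappa != 0 -> gamma != 0 ->
  H kappa (p %/ 2) (p %% 2) (p.+1 %/ 2) (p.+1 %% 2) != 0.
Proof.
move=> kappa0 gamma0; rewrite /Hentry.
case: (p %% 2 =P 0)%N => [e0|e1].
  have -> : (p %/ 2 == p.+1 %/ 2)%N by apply/eqP; lia.
  have -> : (p %% 2 == p.+1 %% 2)%N = false by apply/eqP; lia.
  have -> : (p.+1 %% 2 == 1)%N by apply/eqP; lia.
  by rewrite /= conjC_eq0.
have -> : (p %/ 2 == p.+1 %/ 2)%N = false by apply/eqP; lia.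
have -> : (p.+1 %/ 2 == (p %/ 2).+1)%N by apply/eqP; lia.
have -> : (p %% 2 == 1)%N by apply/eqP; lia.
have -> : (p.+1 %% 2 == 0)%N by apply/eqP; lia.
by rewrite /= fmorph_eq0.
Qed.

Lemma rev_ord_div2 (p : 'I_(2 * m)) : (rev_ord p %/ 2 = m.-1 - p %/ 2)%N.
Proof. by rewrite /=; have := ltn_ord p; lia. Qed.

Lemma rev_ord_mod2 (p : 'I_(2 * m)) : (rev_ord p %% 2 = 1 - p %% 2)%N.
Proof. by rewrite /=; have := ltn_ord p; lia. Qed.

Lemma char_poly_Hhat_phase (k : R) (kappa : R[i]) : 0 < k -> `|kappa| = k%:C ->
  char_poly (Hhat m gamma v kappa) = char_poly (Hhat m gamma v k%:C).
Proof.
move=> k_gt0 normE.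
have k0 : k%:C != 0 :> R[i] by rewrite fmorph_eq0 gt_eqF.
have kappa0 : kappa != 0 by rewrite -normr_eq0 normE.
pose w := kappa / k%:C.
have w0 : w != 0 by rewrite mulf_neq0 ?invr_eq0.
have kappaE : kappa = k%:C * w by rewrite /w mulrC divfK.
have kappaJ : kappa^*%R = k%:C / w.
  apply: (mulfI kappa0); rewrite -normCK normE /w; field.
  by rewrite kappa0 k0.
rewrite -[RHS](@char_poly_diag_conj _ _ (fun p => w ^+ (p %/ 2 + p %% 2))).
  congr (char_poly _); apply/matrixP => p q.
  by rewrite !mxE (Hentry_phase w0 kappaE kappaJ) ?ltn_pmod.
by move=> p; rewrite expf_neq0.
Qed.

Lemma char_poly_Hhat_opp (k : R) :
  char_poly (- Hhat m gamma v k%:C) = char_poly (Hhat m gamma v k%:C).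
Proof.
rewrite -[RHS](@char_poly_rev_sign_conj _ _ (fun p => (-1) ^+ (p %% 2))).
  congr (char_poly _); apply/matrixP => p q.
  have [pm qm] : (p %/ 2 < m)%N /\ (q %/ 2 < m)%N.
    by have := ltn_ord p; have := ltn_ord q; split; lia.
  rewrite !mxE !rev_ord_div2 !rev_ord_mod2.
  by rewrite [in RHS]Hentry_rev_sign ?ltn_pmod.
by move=> p; rewrite -expr2 -exprM mulnC exprM sqrrN !expr1n.
Qed.

Lemma Hhat_hermitian (k : R) : Hhat m gamma v k%:C \is hermsymmx.
Proof.
apply/is_hermitianmxP; rewrite expr0 scale1r.
by apply/matrixP => p q; rewrite !mxE Hentry_adjoint ?ltn_pmod.
Qed.

Lemma Hhat_sub_rank (kappa lam : R[i]) : kappa != 0 -> gamma != 0 ->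
  ((2 * m).-1 <= \rank (Hhat m gamma v kappa - lam%:M)%R)%N.
Proof.
move=> kappa0 gamma0.
apply: mxrank_lower_hessenberg => p q pq;
  have /negbTE pq' : p != q by apply/eqP => e; move: pq; rewrite e; lia.
- by rewrite !mxE pq' mulr0n subr0 Hentry_far.
- by rewrite !mxE pq' mulr0n subr0 pq Hentry_superdiag_neq0.
Qed.

Lemma Hhat_real_simple_eigenvalue (k : R) : k != 0 -> gamma != 0 ->
  forall lam, eigenvalue (Hhat m gamma v k%:C) lam ->
    simple_eigenvalue (Hhat m gamma v k%:C) lam.
Proof.
move=> k0 gamma0; apply: normalmx_simple_eigenvalue.
  exact/hermitian_normalmx/Hhat_hermitian.
by move=> lam; apply: Hhat_sub_rank; rewrite // fmorph_eq0.
Qed.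

Lemma Hhat_real_gap (k : R) : k != 0 -> gamma != 0 ->
  exists2 E : R, 0 < E &
    forall x : R, `|x| < E -> ~~ root (char_poly (Hhat m gamma v k%:C)) x%:C.
Proof.
move=> k0 gamma0; apply: real_roots_away_from0; apply/negP => root0.
have /(Hhat_real_simple_eigenvalue k0 gamma0) mup0 : eigenvalue (Hhat m gamma v k%:C) 0.
  by rewrite eigenvalue_root_char.
have cp_even : char_poly (Hhat m gamma v k%:C) \Po (- 'X) = char_poly (Hhat m gamma v k%:C).
  by rewrite char_poly_comp_oppX char_poly_Hhat_opp exprM sqrrN !expr1n mul1r.
by have := even_poly_mup0_even (monic_neq0 (char_poly_monic _)) cp_even; rewrite mup0.
Qed.

Lemma Hhat_spectral_gap (k : R) : 0 < k -> 0 < gamma ->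
  exists2 E : R, 0 < E & forall kappa : R[i], `|kappa| = k%:C ->
    (forall x : R, `|x| < E -> ~~ eigenvalue (Hhat m gamma v kappa) x%:C) /\
    (forall lam, eigenvalue (Hhat m gamma v kappa) lam ->
       simple_eigenvalue (Hhat m gamma v kappa) lam).
Proof.
move=> k_gt0 gamma_gt0.
have [k0 gamma0] := (lt0r_neq0 k_gt0, lt0r_neq0 gamma_gt0).
have [E E0 gap] := Hhat_real_gap k0 gamma0.
exists E => // kappa normE.
have cpE := char_poly_Hhat_phase k_gt0 normE.
split => [x /gap|lam]; first by rewrite eigenvalue_root_char cpE.
rewrite /simple_eigenvalue eigenvalue_root_char cpE -eigenvalue_root_char.
by move=> /(Hhat_real_simple_eigenvalue k0 gamma0).
Qed.

End Hamiltonian.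

Theorem theorem2p2 (R : rcfType) (m : nat) (gamma u k : R) :
  (2 <= m)%N -> 0 < gamma -> 0 < u -> 0 < k ->
  exists E0 : R, 0 < E0 /\
    forall (h : NS) (kappa : R[i]), `|kappa| = k%:C ->
      (forall x : R, - E0 < x < E0 ->
          ~~ eigenvalue (Hh h m gamma u kappa) x%:C) /\
      (forall lam : R[i], eigenvalue (Hh h m gamma u kappa) lam ->
          simple_eigenvalue (Hh h m gamma u kappa) lam).
Proof.
move=> _ gamma_gt0 _ k_gt0.
have [EN EN0 gapN] := Hhat_spectral_gap m u k_gt0 gamma_gt0.
have [ES ES0 gapS] := Hhat_spectral_gap m (- u) k_gt0 gamma_gt0.
exists (Num.min EN ES); split; first by rewrite lt_min EN0 ES0.
move=> h kappa normE.
have [noN simpleN] := gapN kappa normE; have [noS simpleS] := gapS kappa normE.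
case: h; split.
- by move=> x; rewrite -ltr_norml lt_min => /andP [/noN xN _].
- exact: simpleN.
- by move=> x; rewrite -ltr_norml lt_min => /andP [_ /noS xS].
- exact: simpleS.
Qed.
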